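(* Let $\mathscr{H}$ be a complex Hilbert space and let $B,C$ be Hilbert–Schmidt operators on $\mathscr{H}$. Then $$w_{(2,e)}^2(B,C)\geq\frac18\,|\mathrm{tr}((B+C)^2)+\mathrm{tr}((B-C)^2)+2\,\mathrm{tr}((B+C)(B-C))|+\frac18\left(\|B+C\|_2^2+\|B-C\|_2^2\right)+\frac14\,\mathrm{Re}\big(\mathrm{tr}((B+C)(B-C)^* )\big),$$ where $\mathrm{Re}(z)$ denotes the real part of $z\in\mathbb{C}$.
   Context: An operator $T$ on $\mathscr{H}$ is Hilbert–Schmidt if $\sum_i\|Te_i\|^2<\infty$ for some (equivalently every) orthonormal basis $\{e_i\}$; its Hilbert–Schmidt norm is $\|T\|_2=(\mathrm{tr}(T^*T))^{1/2}$. For an operator $T$, $\Re(T)=\frac12(T+T^* )$. The Hilbert–Schmidt Euclidean operator radius is $w_{(2,e)}(B,C)=\sup_{\lambda_1,\lambda_2\in\mathbb{C},\ |\lambda_1|^2+|\lambda_2|^2\leq1}\sup_{\theta\in\mathbb{R}}\|\Re(e^{i\theta}(\lambda_1B+\lambda_2C))\|_2$. *)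

From HB Require Import structures.
From mathcomp Require Import all_boot all_order all_algebra.
From mathcomp Require Import all_classical all_reals all_analysis.
From mathcomp.real_closed Require Import complex.
From mathcomp Require Import finmap.
Import Order.TTheory GRing.Theory Num.Theory.

Set Implicit Arguments.
Unset Strict Implicit.
Unset Printing Implicit Defensive.

Local Open Scope classical_set_scope.
Local Open Scope ring_scope.
Local Open Scope complex_scope.

Section Hilbert.
Variables (R : realType) (H : lmodType R[i]) (ip : H -> H -> R[i]).

Definition hnorm (x : H) : R := Num.sqrt (complex.Re (ip x x)).

Record is_hilbert : Prop := {
  ip_linl : forall (a : R[i]) (x y z : H), ip (a *: x + y) z = a * ip x z + ip y z;
  ip_conj : forall x y : H, ip y x = (ip x y)^*;
  ip_ge0 : forall x : H, 0 <= ip x x;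
  ip_def : forall x : H, ip x x = 0 -> x = 0;
  ip_complete : forall u : nat -> H,
    (forall e : R, 0 < e -> exists N : nat, forall m n : nat,
        (N <= m)%N -> (N <= n)%N -> hnorm (u m - u n) < e) ->
    exists l : H, forall e : R, 0 < e -> exists N : nat, forall n : nat,
        (N <= n)%N -> hnorm (u n - l) < e }.

Definition bounded_linear (T : H -> H) : Prop :=
  (forall (a : R[i]) (x y : H), T (a *: x + y) = a *: T x + T y) /\
  exists M : R, forall x : H, hnorm (T x) <= M * hnorm x.

Definition orthonormal_basis (E : set H) : Prop :=
  (forall e, E e -> ip e e = 1) /\
  (forall e f, E e -> E f -> e <> f -> ip e f = 0) /\
  (forall x, (forall e, E e -> ip x e = 0) -> x = 0).

Definition hilbert_schmidt (T : H -> H) : Prop :=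
  bounded_linear T /\
  exists E : set H, orthonormal_basis E /\
    (\esum_(e in E) ((hnorm (T e)) ^+ 2)%:E < +oo)%E.

Definition adj (T : H -> H) : H -> H :=
  fun x => xget 0 [set y | forall z : H, ip (T z) x = ip z y].

(* unordered summation over E (limit of the net of finite partial sums) *)
Definition has_sum (E : set H) (f : H -> R[i]) (s : R[i]) : Prop :=
  forall eps : R, 0 < eps -> exists F0 : {fset H}, [set` F0] `<=` E /\
    forall F : {fset H}, [set` F] `<=` E -> (F0 `<=` F)%fset ->
      `| \sum_(e <- F) f e - s | < eps%:C.

Definition trace (E : set H) (T : H -> H) : R[i] :=
  xget 0 [set s | has_sum E (fun e => ip (T e) e) s].

Definition hs_norm (E : set H) (T : H -> H) : R :=
  Num.sqrt (complex.Re (trace E (adj T \o T))).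

Definition ReOp (T : H -> H) : H -> H := fun x => 2^-1 *: (T x + adj T x).

Definition expi (t : R) : R[i] := (cos t) +i* (sin t).

Definition w2e (E : set H) (B C : H -> H) : R :=
  sup [set r : R | exists (l1 l2 : R[i]) (t : R),
         `|l1| ^+ 2 + `|l2| ^+ 2 <= 1 /\
         r = hs_norm E (ReOp (fun x => expi t *: (l1 *: B x + l2 *: C x)))].

End Hilbert.

From HB Require Import structures.
From mathcomp Require Import all_boot all_order all_algebra.
From mathcomp Require Import all_classical all_reals all_analysis.
From mathcomp.real_closed Require Import complex.
From mathcomp Require Import finmap.
From mathcomp Require Import ring lra.
Import Order.TTheory GRing.Theory Num.Theory.
Local Open Scope classical_set_scope.
Local Open Scope ring_scope.
Local Open Scope complex_scope.
Set Implicit Arguments.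
Unset Strict Implicit.
Unset Printing Implicit Defensive.

(* With P = B + C and M = B - C, linearity of the trace and tr(BC) = tr(CB) give
   tr(P^2) + tr(M^2) + 2 tr(PM) = 4 tr(B^2), the parallelogram law gives
   |P|_2^2 + |M|_2^2 = 2 |B|_2^2 + 2 |C|_2^2, and Re tr(P M^* ) = |B|_2^2 - |C|_2^2, so the
   left-hand side is (|B|_2^2 + |tr(B^2)|) / 2.  For a unit lambda,
   |Re(lambda B)|_2^2 = (|B|_2^2 + |B^*|_2^2) / 4 + Re(lambda^2 tr(B^2)) / 2; choosing
   lambda^2 tr(B^2) = |tr(B^2)| (and theta = 0, lambda_2 = 0) makes this exactly the left-hand
   side, while all the numbers in the supremum defining w_(2,e) are bounded in terms of the
   Hilbert-Schmidt sums of B, C, B^* and C^*.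

   Since [adj], [trace] and [sup] return junk values when the adjoint, the sum or a bounded
   supremum does not exist, every step needs the corresponding existence result.  These come from
   the Hilbert space axioms alone: Riesz-Fischer and Parseval for an arbitrary orthonormal basis
   yield the Riesz representation theorem and hence adjoints; exchanging a Parseval sum with a
   Bessel sum shows that sum_e |T e|^2 does not depend on the basis and equals sum_e |T^* e|^2;
   and polarization turns the trace series of a product of Hilbert-Schmidt operators into
   squared-norm series, which also proves tr(XY) = tr(YX). *)

Section ComplexFacts.
Variable R : realType.
Implicit Types (z w : R[i]) (r : R).

Definition cmod z : R := Num.sqrt (complex.Re z ^+ 2 + complex.Im z ^+ 2).

(* [cmod] is [Normc.normc] restated over a [realType]: rewriting with the [Normc] lemmas
   fails on complex numbers whose type is reached through [H : lmodType R[i]]. *)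
Lemma cmod_normc z : cmod z = Normc.normc z.
Proof. by case: z. Qed.

Lemma cmod_ge0 z : 0 <= cmod z.
Proof. exact: sqrtr_ge0. Qed.

Lemma sqr_cmod z : cmod z ^+ 2 = complex.Re z ^+ 2 + complex.Im z ^+ 2.
Proof. by rewrite sqr_sqrtr // addr_ge0 ?sqr_ge0. Qed.

Lemma cmodE z : `|z| = (cmod z)%:C.
Proof. by case: z. Qed.

Lemma cmod_lt z r : (`|z| < r%:C) = (cmod z < r).
Proof. by rewrite cmodE ltcR. Qed.

Lemma cmod_eq0 z : cmod z = 0 -> z = 0.
Proof. by rewrite cmod_normc; apply: Normc.eq0_normc. Qed.

Lemma cmod0 : cmod 0 = 0.
Proof. by rewrite cmod_normc Normc.normc0. Qed.

Lemma cmod1 : cmod 1 = 1.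
Proof. by rewrite cmod_normc Normc.normc1. Qed.

Lemma cmodM z w : cmod (z * w) = cmod z * cmod w.
Proof. by rewrite !cmod_normc Normc.normcM. Qed.

Lemma cmodV z : cmod z^-1 = (cmod z)^-1.
Proof. by rewrite !cmod_normc Normc.normcV. Qed.

Lemma cmodN z : cmod (- z) = cmod z.
Proof. by rewrite !cmod_normc normcN. Qed.

Lemma cmodD_le z w : cmod (z + w) <= cmod z + cmod w.
Proof. by rewrite !cmod_normc le_normcD. Qed.

Lemma cmodB_le z w : cmod (z - w) <= cmod z + cmod w.
Proof. by rewrite -(cmodN w) cmodD_le. Qed.

Lemma cmodR r : cmod r%:C = `|r|.
Proof. by rewrite /cmod /= expr0n addr0 sqrtr_sqr. Qed.

Lemma cmodJ z : cmod (conjc z) = cmod z.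
Proof. by case: z => a b; rewrite /cmod /= sqrrN. Qed.

Lemma conjcR r : conjc r%:C = r%:C.
Proof. by rewrite /= oppr0. Qed.

Lemma conjcMR z r : conjc (z * r%:C) = conjc z * r%:C.
Proof. by case: z => a b; apply/eqP; rewrite eq_complex /=; apply/andP; split; apply/eqP; ring. Qed.

Lemma mulcJ z : z * conjc z = (cmod z ^+ 2)%:C.
Proof.
rewrite sqr_cmod; case: z => a b; apply/eqP.
by rewrite eq_complex /=; apply/andP; split; apply/eqP; ring.
Qed.

Lemma Re_le_cmod z : `|complex.Re z| <= cmod z.
Proof. by rewrite -sqrtr_sqr ler_wsqrtr // lerDl sqr_ge0. Qed.

Lemma Im_le_cmod z : `|complex.Im z| <= cmod z.
Proof. by rewrite -sqrtr_sqr ler_wsqrtr // lerDr sqr_ge0. Qed.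

Lemma cmod_le_eq0 z : (forall e : R, 0 < e -> cmod z <= e) -> z = 0.
Proof.
move=> h; apply: cmod_eq0; apply/eqP; rewrite eq_le cmod_ge0 andbT.
by apply/ler_addgt0Pr => e e0; rewrite add0r; apply: h.
Qed.

Lemma conjc_inv2 : conjc (2^-1 : R[i]) = 2^-1.
Proof. by rewrite -(rmorph_nat (real_complex R) 2) -fmorphV conjcR. Qed.

Lemma Re_conjc z : complex.Re (conjc z) = complex.Re z.
Proof. by case: z. Qed.

Lemma invn_complex n : (n%:R^-1 : R[i]) = (n%:R^-1 : R)%:C.
Proof. by rewrite fmorphV rmorph_nat. Qed.

Lemma cmod_inv2 : cmod (2^-1 : R[i]) = 2^-1.
Proof. by rewrite cmodV -(rmorph_nat (real_complex R)) cmodR ger0_norm. Qed.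

Lemma cmodi : cmod ('i : R[i]) = 1.
Proof. by rewrite /cmod /= expr0n add0r expr1n sqrtr1. Qed.

Lemma Re_norm z : complex.Re `|z| = cmod z.
Proof. by rewrite cmodE. Qed.

Lemma cmod_natr n : cmod n%:R = n%:R.
Proof. by rewrite -(rmorph_nat (real_complex R)) cmodR normr_nat. Qed.

Lemma Re_realM r z : complex.Re (r%:C * z) = r * complex.Re z.
Proof. by case: z => a b /=; rewrite mul0r subr0. Qed.

Lemma expi0 : expi (0 : R) = 1.
Proof. by rewrite /expi cos0 sin0. Qed.

Lemma cmod_expi (t : R) : cmod (expi t) = 1.
Proof. by rewrite /cmod /expi cos2Dsin2 sqrtr1. Qed.

Lemma exists_phase z : exists l, cmod l = 1 /\ l * l * z = (cmod z)%:C.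
Proof.
have [->|z0] := eqVneq z 0; first by exists 1; rewrite cmod1 mulr0 cmod0.
have n0 : 0 < cmod z by rewrite lt_def cmod_ge0 andbT; apply: contra z0 => /eqP/cmod_eq0 ->.
pose l := sqrtc (conjc z / (cmod z)%:C).
have ll : l * l = conjc z / (cmod z)%:C by rewrite -expr2 sqr_sqrtc.
have nz : (cmod z)%:C != 0 :> R[i] by rewrite eq_complex /= gt_eqF.
exists l; split; last by rewrite ll mulrAC [conjc z * z]mulrC mulcJ expr2 rmorphM mulfK.
have : cmod l ^+ 2 = 1.
  by rewrite expr2 -cmodM ll cmodM cmodV cmodJ cmodR gtr0_norm ?mulfV ?gt_eqF.
by move/eqP; rewrite sqrf_eq1 => /orP[/eqP //|/eqP h]; have := cmod_ge0 l; rewrite h; lra.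
Qed.

End ComplexFacts.

Section LinearMap.
Variables (K : pzRingType) (V W : lmodType K) (T : V -> W).
Hypothesis T_lin : forall a x y, T (a *: x + y) = a *: T x + T y.

Lemma linmap0 : T 0 = 0.
Proof.
have := T_lin 1 0 0; rewrite !scale1r addr0 => h.
by apply: (addrI (T 0)); rewrite addr0 -h.
Qed.

Lemma linmapD x y : T (x + y) = T x + T y.
Proof. by have := T_lin 1 x y; rewrite !scale1r. Qed.

Lemma linmapZ a x : T (a *: x) = a *: T x.
Proof. by have := T_lin a x 0; rewrite !addr0 linmap0 addr0. Qed.

Lemma linmapB x y : T (x - y) = T x - T y.
Proof. by rewrite linmapD -scaleN1r linmapZ scaleN1r. Qed.

End LinearMap.

Section InnerProduct.
Variables (R : realType) (H : lmodType R[i]) (ip : H -> H -> R[i]).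
Hypothesis hH : is_hilbert ip.
Implicit Types (x y z : H) (a : R[i]).

Lemma ipDl x y z : ip (x + y) z = ip x z + ip y z.
Proof. by have := ip_linl hH 1 x y z; rewrite scale1r mul1r. Qed.

Lemma ip0l z : ip 0 z = 0.
Proof. by apply/(addrI (ip 0 z)); rewrite -ipDl !addr0. Qed.

Lemma ipZl a x z : ip (a *: x) z = a * ip x z.
Proof. by have := ip_linl hH a x 0 z; rewrite addr0 ip0l addr0. Qed.

Lemma ipNl x z : ip (- x) z = - ip x z.
Proof. by rewrite -scaleN1r ipZl mulN1r. Qed.

Lemma ipBl x y z : ip (x - y) z = ip x z - ip y z.
Proof. by rewrite ipDl ipNl. Qed.

Lemma ipC x y : ip x y = conjc (ip y x).
Proof. exact: ip_conj hH y x. Qed.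

Lemma ipDr x y z : ip x (y + z) = ip x y + ip x z.
Proof. by rewrite ipC ipDl rmorphD /= -!ipC. Qed.

Lemma ip0r z : ip z 0 = 0.
Proof. by rewrite ipC ip0l conjc0. Qed.

Lemma ipZr a x y : ip x (a *: y) = conjc a * ip x y.
Proof. by rewrite ipC ipZl rmorphM /= -!ipC. Qed.

Lemma ipNr x z : ip z (- x) = - ip z x.
Proof. by rewrite ipC ipNl rmorphN /= -ipC. Qed.

Lemma ipBr x y z : ip z (x - y) = ip z x - ip z y.
Proof. by rewrite ipDr ipNr. Qed.

Lemma ip_suml (I : Type) (s : seq I) (f : I -> H) z :
  ip (\sum_(i <- s) f i) z = \sum_(i <- s) ip (f i) z.
Proof. exact: (big_morph (ip^~ z) (fun x y => ipDl x y z) (ip0l z)). Qed.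

Lemma ip_sumr (I : Type) (s : seq I) (f : I -> H) z :
  ip z (\sum_(i <- s) f i) = \sum_(i <- s) ip z (f i).
Proof. exact: (big_morph (ip z) (ipDr z) (ip0r z)). Qed.

Lemma Re_ipC x y : complex.Re (ip y x) = complex.Re (ip x y).
Proof. by rewrite ipC; case: (ip x y). Qed.

Lemma hnorm_ge0 x : 0 <= hnorm ip x.
Proof. exact: sqrtr_ge0. Qed.

Lemma ip_self x : ip x x = (hnorm ip x ^+ 2)%:C.
Proof.
have := ip_ge0 hH x; rewrite /hnorm; case: (ip x x) => a b.
by rewrite lecE /= => /andP[/eqP -> a0]; rewrite sqr_sqrtr.
Qed.

Lemma sqr_hnorm x : hnorm ip x ^+ 2 = complex.Re (ip x x).
Proof. by rewrite ip_self. Qed.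

Lemma hnorm_eq0 x : hnorm ip x = 0 -> x = 0.
Proof. by move=> h; apply: (ip_def hH); rewrite ip_self h expr0n. Qed.

Lemma hnorm0 : hnorm ip 0 = 0.
Proof. by rewrite /hnorm ip0l sqrtr0. Qed.

Lemma hnormZ a x : hnorm ip (a *: x) = cmod a * hnorm ip x.
Proof.
rewrite {1}/hnorm ipZl ipZr mulrA mulcJ ip_self -rmorphM /= -exprMn.
by rewrite sqrtr_sqr ger0_norm // mulr_ge0 ?cmod_ge0 ?hnorm_ge0.
Qed.

Lemma hnorm_opp x : hnorm ip (- x) = hnorm ip x.
Proof. by rewrite -scaleN1r hnormZ cmodN cmod1 mul1r. Qed.

Lemma sqr_hnormD x y :
  hnorm ip (x + y) ^+ 2 = hnorm ip x ^+ 2 + hnorm ip y ^+ 2 + 2 * complex.Re (ip x y).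
Proof. rewrite !sqr_hnorm ipDl !ipDr !raddfD /= [complex.Re (ip y x)]Re_ipC; ring. Qed.

Lemma sqr_hnormB x y :
  hnorm ip (x - y) ^+ 2 = hnorm ip x ^+ 2 + hnorm ip y ^+ 2 - 2 * complex.Re (ip x y).
Proof. by rewrite sqr_hnormD hnorm_opp ipNr raddfN mulrN. Qed.

Lemma sqr_hnormD_le x y : hnorm ip (x + y) ^+ 2 <= 2 * hnorm ip x ^+ 2 + 2 * hnorm ip y ^+ 2.
Proof. have := sqr_ge0 (hnorm ip (x - y)); rewrite sqr_hnormB sqr_hnormD; lra. Qed.

Lemma ip_inj x y : (forall z, ip z x = ip z y) -> x = y.
Proof.
move=> h; apply/eqP; rewrite -subr_eq0; apply/eqP/(ip_def hH).
by rewrite ipBr h subrr.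
Qed.

(* Cauchy-Schwarz: expand 0 <= |x - t y|^2 with t = <x, y> / |y|^2. *)
Lemma cmod_ip_le x y : cmod (ip x y) <= hnorm ip x * hnorm ip y.
Proof.
have [y0|ny] := eqVneq (hnorm ip y) 0.
  by rewrite (hnorm_eq0 y0) ip0r cmod0 hnorm0 mulr0.
have c0 : 0 < hnorm ip y ^+ 2 by rewrite exprn_gt0 // lt_def ny hnorm_ge0.
set u := ip x y; set c := hnorm ip y ^+ 2 in c0.
have := sqr_ge0 (hnorm ip (x - (u * (c^-1)%:C) *: y)).
rewrite sqr_hnormB hnormZ ipZr -/u conjcMR mulrAC [conjc u * u]mulrC mulcJ -rmorphM /=.
have ci : 0 <= c^-1 by rewrite invr_ge0 ltW.
rewrite cmodM cmodR (ger0_norm ci).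
have -> : (cmod u / c * hnorm ip y) ^+ 2 = cmod u ^+ 2 / c.
  by rewrite !exprMn -/c; field; rewrite gt_eqF.
move=> h; have : cmod u ^+ 2 / c <= hnorm ip x ^+ 2 by lra.
rewrite ler_pdivrMr // /c -exprMn => hu.
by rewrite -(ler_pXn2r (n := 2)) ?nnegrE ?cmod_ge0 ?mulr_ge0 ?hnorm_ge0.
Qed.

Lemma ler_hnormD x y : hnorm ip (x + y) <= hnorm ip x + hnorm ip y.
Proof.
rewrite -(ler_pXn2r (n := 2)) ?nnegrE ?addr_ge0 ?hnorm_ge0 // sqr_hnormD sqrrD.
have := cmod_ip_le x y; have := Re_le_cmod (ip x y).
have := ler_norm (complex.Re (ip x y)); lra.
Qed.

Definition cvg_hnorm (u : nat -> H) y :=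
  forall eps : R, 0 < eps -> exists N, forall n, (N <= n)%N -> hnorm ip (u n - y) < eps.

Lemma cvg_hnorm_of_sqr_step (u : nat -> H) :
  (forall n m, (n <= m)%N -> hnorm ip (u m - u n) ^+ 2 <= n.+1%:R^-1) ->
  exists y, cvg_hnorm u y.
Proof.
move=> u_step; apply: (ip_complete hH) => eps e0.
have [N] := ltr_add_invr (mulr_gt0 e0 e0); rewrite add0r => hN; exists N.
suff step n m : (N <= n)%N -> (n <= m)%N -> hnorm ip (u m - u n) < eps.
  move=> m n Nm Nn; case: (leqP n m) => [|/ltnW] nm; first exact: step.
  by rewrite -hnorm_opp opprB; apply: step.
move=> Nn nm; rewrite -(ltr_pXn2r (n := 2)) ?nnegrE ?hnorm_ge0 ?(ltW e0) //.
apply: le_lt_trans (u_step _ _ nm) (le_lt_trans _ hN).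
by rewrite lef_pV2 ?posrE ?ltr0n // ler_nat.
Qed.

Lemma ip_cvg_eventually (u : nat -> H) y z a : cvg_hnorm u y ->
  (exists N, forall n, (N <= n)%N -> ip (u n) z = a) -> ip y z = a.
Proof.
move=> uy [N uN]; apply/eqP; rewrite -subr_eq0; apply/eqP/cmod_le_eq0 => eps e0.
have z1 : 0 < hnorm ip z + 1 by have := hnorm_ge0 z; lra.
have [N' uN'] := uy _ (divr_gt0 e0 z1).
rewrite -(uN (maxn N N')) ?leq_maxl // -cmodN opprB -ipBl.
apply: le_trans (cmod_ip_le _ _) _.
have := uN' _ (leq_maxr N N'); rewrite ltr_pdivlMr // mulrDr mulr1.
by have := hnorm_ge0 (u (maxn N N') - y); lra.
Qed.

Lemma hnorm_cvg_le (u : nat -> H) y (M : R) : cvg_hnorm u y ->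
  (forall n, hnorm ip (u n) <= M) -> hnorm ip y <= M.
Proof.
move=> uy uM; apply/ler_addgt0Pr => eps /uy [N uN].
have := ler_hnormD (u N) (y - u N); rewrite addrC subrK -opprB hnorm_opp.
by have := uN N (leqnn N); have := uM N; lra.
Qed.

Definition is_adjoint (T T' : H -> H) := forall x y, ip (T x) y = ip x (T' y).

Lemma is_adjoint_sym (T T' : H -> H) : is_adjoint T T' -> is_adjoint T' T.
Proof. by move=> h x y; rewrite ipC -h -ipC. Qed.

Lemma is_adjoint_comb (T1 T1' T2 T2' : H -> H) (a b : R[i]) :
  is_adjoint T1 T1' -> is_adjoint T2 T2' ->
  is_adjoint (fun x => a *: T1 x + b *: T2 x) (fun y => conjc a *: T1' y + conjc b *: T2' y).
Proof.
by move=> h1 h2 x y; rewrite ipDl ipDr !ipZl !ipZr !conjcK h1 h2.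
Qed.

Lemma adjE (T T' : H -> H) : is_adjoint T T' -> adj ip T =1 T'.
Proof.
move=> h y; apply: xget_unique => [z|w hw]; first exact: h.
by apply: ip_inj => z; rewrite -hw h.
Qed.

End InnerProduct.

Section UnorderedSums.
Variables (R : realType) (H : lmodType R[i]) (E : set H).
Implicit Types (f g : H -> R[i]) (s t : R[i]).

Lemma subset_fsetU (F1 F2 : {fset H}) :
  [set` F1] `<=` E -> [set` F2] `<=` E -> [set` (F1 `|` F2)%fset] `<=` E.
Proof. by move=> h1 h2 x /=; rewrite in_fsetU => /orP[/h1|/h2]. Qed.

Lemma has_sumP f s : has_sum E f s <-> forall eps : R, 0 < eps -> exists F0 : {fset H},
  [set` F0] `<=` E /\ forall F : {fset H}, [set` F] `<=` E -> (F0 `<=` F)%fset ->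
  cmod (\sum_(e <- F) f e - s) < eps.
Proof.
by split=> h eps /h [F0 [h1 h2]]; exists F0; split=> // F hF hF0;
  [rewrite -cmod_lt | rewrite cmod_lt]; apply: h2.
Qed.

Lemma has_sum_unique f s t : has_sum E f s -> has_sum E f t -> s = t.
Proof.
move=> /has_sumP hs /has_sumP ht; apply/eqP; rewrite -subr_eq0; apply/eqP/cmod_le_eq0 => eps e0.
have e2 : 0 < eps / 2 by rewrite divr_gt0.
have [F1 [F1E k1]] := hs _ e2; have [F2 [F2E k2]] := ht _ e2.
have U := subset_fsetU F1E F2E.
have a1 := k1 _ U (fsubsetUl _ _); have a2 := k2 _ U (fsubsetUr _ _).
set S := \sum_(e <- _) f e in a1 a2.
have -> : s - t = (S - t) - (S - s) by ring.
by apply: le_trans (cmodB_le _ _) _; lra.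
Qed.

Lemma eq_has_sum f g s : (forall e, E e -> f e = g e) -> has_sum E f s -> has_sum E g s.
Proof.
move=> fg /has_sumP h; apply/has_sumP => eps /h [F0 [h1 h2]]; exists F0; split=> // F hF hsub.
rewrite (eq_big_seq f) => [|e eF]; first exact: h2.
by rewrite fg //; apply: hF.
Qed.

Lemma has_sumD f g s t : has_sum E f s -> has_sum E g t ->
  has_sum E (fun e => f e + g e) (s + t).
Proof.
move=> /has_sumP hs /has_sumP ht; apply/has_sumP => eps e0.
have e2 : 0 < eps / 2 by rewrite divr_gt0.
have [F1 [F1E k1]] := hs _ e2; have [F2 [F2E k2]] := ht _ e2.
exists (F1 `|` F2)%fset; split => [|F hF hsub]; first exact: subset_fsetU.
have a1 := k1 _ hF (fsubset_trans (fsubsetUl _ _) hsub).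
have a2 := k2 _ hF (fsubset_trans (fsubsetUr _ _) hsub).
rewrite big_split /= opprD addrACA.
by apply: le_lt_trans (cmodD_le _ _) _; lra.
Qed.

Lemma has_sumMl c f s : has_sum E f s -> has_sum E (fun e => c * f e) (c * s).
Proof.
move=> /has_sumP h; apply/has_sumP => eps e0.
have c1 : 0 < cmod c + 1 by have := cmod_ge0 c; lra.
have [F0 [F0E k]] := h _ (divr_gt0 e0 c1).
exists F0; split => // F hF hsub; rewrite -mulr_sumr -mulrBr cmodM.
apply: le_lt_trans (ler_wpM2l (cmod_ge0 c) (ltW (k _ hF hsub))) _.
by rewrite mulrA ltr_pdivrMr // mulrDr mulr1 mulrC ltrDl.
Qed.

Lemma has_sumN f s : has_sum E f s -> has_sum E (fun e => - f e) (- s).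
Proof.
by move=> /(has_sumMl (-1)); rewrite mulN1r; apply: eq_has_sum => e _; rewrite mulN1r.
Qed.

Lemma has_sumB f g s t : has_sum E f s -> has_sum E g t ->
  has_sum E (fun e => f e - g e) (s - t).
Proof. by move=> hs /has_sumN; apply: has_sumD. Qed.

Lemma has_sum_conjc f s : has_sum E f s -> has_sum E (fun e => conjc (f e)) (conjc s).
Proof.
move=> /has_sumP h; apply/has_sumP => eps /h [F0 [h1 h2]]; exists F0; split => // F hF hsub.
by have := h2 _ hF hsub; rewrite -cmodJ rmorphB rmorph_sum.
Qed.

Lemma has_sum_le (g : H -> R) s (K : R) : has_sum E (fun e => (g e)%:C) s ->
  (forall F : {fset H}, [set` F] `<=` E -> \sum_(e <- F) g e <= K) ->
  complex.Re s <= K.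
Proof.
move=> /has_sumP h hK; apply/ler_addgt0Pr => eps /h [F0 [h1 h2]].
have := h2 _ h1 (fsubset_refl _); have := hK _ h1.
rewrite -rmorph_sum; set u := \sum_(e <- F0) g e => a b.
have := Re_le_cmod (u%:C - s); rewrite raddfB /= => c.
have := ler_norm (- (u - complex.Re s)); rewrite normrN; lra.
Qed.

Lemma has_sum_realE (g : H -> R) s : has_sum E (fun e => (g e)%:C) s -> s = (complex.Re s)%:C.
Proof.
move=> /has_sumP h; suff : complex.Im s = 0 by case: s h => a b /= _ ->.
apply/eqP; rewrite -normr_le0; apply/ler_addgt0Pr => eps /h [F0 [h1 h2]].
have := h2 _ h1 (fsubset_refl _); rewrite -rmorph_sum.
set u := \sum_(e <- F0) g e => a.
have := Im_le_cmod (u%:C - s); rewrite raddfB /= sub0r normrN; lra.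
Qed.

Section Nonnegative.
Variable g : H -> R.
Hypothesis g_ge0 : forall e, E e -> 0 <= g e.

Lemma le_sum_fsubset (F0 F : {fset H}) : [set` F] `<=` E -> (F0 `<=` F)%fset ->
  \sum_(e <- F0) g e <= \sum_(e <- F) g e.
Proof.
move=> FE sub; rewrite (eq_big_seq (fun x => if x \in F0 then g x else 0)) => [|x ->//].
rewrite (big_fset_incl _ sub) => [|x _ /negbTE -> //].
rewrite big_seq [leRHS]big_seq; apply: ler_sum => x xF.
by case: ifP => // _; apply/g_ge0/FE.
Qed.

Lemma fsum_le_has_sum s : has_sum E (fun e => (g e)%:C) s ->
  forall F : {fset H}, [set` F] `<=` E -> \sum_(e <- F) g e <= complex.Re s.
Proof.
move=> /has_sumP h F FE; apply/ler_addgt0Pr => eps /h [F0 [F0E k]].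
have U := subset_fsetU FE F0E.
have b := k _ U (fsubsetUr _ _); have a := le_sum_fsubset U (fsubsetUl F F0).
rewrite -rmorph_sum in b; set x := \sum_(e <- (F `|` F0)%fset) g e in a b.
have := Re_le_cmod (x%:C - s); rewrite raddfB /= => c.
have := ler_norm (x - complex.Re s); lra.
Qed.

Lemma exhausting_fsets (K : R) :
  (forall F : {fset H}, [set` F] `<=` E -> \sum_(e <- F) g e <= K) ->
  exists (s : R) (A : nat -> {fset H}),
    [/\ forall F : {fset H}, [set` F] `<=` E -> \sum_(e <- F) g e <= s,
        forall n, [set` A n] `<=` E,
        forall n m, (n <= m)%N -> (A n `<=` A m)%fset,
        forall n, s - n.+1%:R^-1 < \sum_(e <- A n) g e &
        forall e, E e -> (forall n, e \notin A n) -> g e = 0].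
Proof.
move=> hK.
set S := [set x : R | exists2 F : {fset H}, [set` F] `<=` E & x = \sum_(e <- F) g e].
have hS : has_sup S.
  split; first by exists 0, fset0; [move=> x /=; rewrite in_fset0 | rewrite big_nil].
  by exists K => x [F FE ->]; apply: hK.
have /choice [G hG] : forall n, exists F : {fset H},
    [set` F] `<=` E /\ sup S - n.+1%:R^-1 < \sum_(e <- F) g e.
  move=> n; have n0 : 0 < n.+1%:R^-1 :> R by rewrite invr_gt0 ltr0n.
  by have [_ [F FE ->] lt] := sup_adherent n0 hS; exists F.
pose A n := (\bigcup_(k <- iota 0 n.+1) G k)%fset.
have AE n : [set` A n] `<=` E by move=> x /bigfcupP[k _ /(proj1 (hG k))].
have ubS (F : {fset H}) : [set` F] `<=` E -> \sum_(e <- F) g e <= sup S.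
  by move=> FE; apply: sup_upper_bound => //; rewrite /S /=; exists F.
have lowA n : sup S - n.+1%:R^-1 < \sum_(e <- A n) g e.
  apply: lt_le_trans (proj2 (hG n)) _; apply: le_sum_fsubset (AE n) _.
  by apply: bigfcup_sup => //; rewrite mem_iota leq0n add0n ltnSn.
exists (sup S), A; split => // [n m nm|e Ee eA].
- apply/bigfcupsP => k; rewrite mem_iota => /andP[_ kn] _.
  by apply: bigfcup_sup => //; rewrite mem_iota /= (leq_trans kn).
- (* adding [e] to [A n] raises the sum by [g e], which must stay below the gap [1/(n+1)] *)
  apply/eqP; rewrite eq_le g_ge0 // andbT; apply/ler_addgt0Pr => d /ltr_add_invr [n].
  rewrite !add0r => hn.
  have eAE : [set` (e |` A n)%fset] `<=` E.
    by move=> x /=; rewrite !inE => /orP[/eqP ->|/(AE n)].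
  have := ubS _ eAE; rewrite big_fsetU1 ?eA //=; have := lowA n.
  by set t := n.+1%:R^-1 in hn *; lra.
Qed.

Lemma has_sum_bounded (K : R) :
  (forall F : {fset H}, [set` F] `<=` E -> \sum_(e <- F) g e <= K) ->
  exists s : R, has_sum E (fun e => (g e)%:C) s%:C.
Proof.
move=> /exhausting_fsets [s [A [ub AE _ lowA _]]].
exists s; apply/has_sumP => eps /ltr_add_invr [n]; rewrite add0r => neps.
exists (A n); split => // F FE sub.
have := lowA n; have := le_sum_fsubset FE sub; have := ub F FE.
rewrite -rmorph_sum -rmorphB cmodR; set x := \sum_(e <- F) g e => h1 h2 h3.
rewrite ler0_norm ?subr_le0 //; set d := n.+1%:R^-1 in neps h3; lra.
Qed.

End Nonnegative.
End UnorderedSums.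

Section OrthonormalBasis.
Variables (R : realType) (H : lmodType R[i]) (ip : H -> H -> R[i]).
Hypothesis hH : is_hilbert ip.
Variables (E : set H) (hE : orthonormal_basis ip E).
Implicit Types (x y : H) (s : seq H) (F : {fset H}).

Lemma onb_ip1 e : E e -> ip e e = 1.
Proof. by case: hE => h _; apply: h. Qed.

Lemma onb_ip0 e f : E e -> E f -> e <> f -> ip e f = 0.
Proof. by case: hE => _ [h _]; apply: h. Qed.

Lemma onb_total x : (forall e, E e -> ip x e = 0) -> x = 0.
Proof. by case: hE => _ [_ h]; apply: h. Qed.

Lemma ip_lincomb s (c : H -> R[i]) f : uniq s -> (forall e, e \in s -> E e) -> E f ->
  ip (\sum_(e <- s) c e *: e) f = if f \in s then c f else 0.
Proof.
move=> us sE Ef; rewrite (ip_suml hH); under eq_bigr do rewrite (ipZl hH).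
case: ifP => fs.
  rewrite (bigD1_seq f) //= onb_ip1 // mulr1 big1_seq ?addr0 // => e /andP[nef es].
  by rewrite onb_ip0 ?mulr0 //; [exact: sE | exact/eqP].
rewrite big1_seq // => e /andP[_ es]; rewrite onb_ip0 ?mulr0 //; first exact: sE.
by move=> ef; rewrite -ef es in fs.
Qed.

Lemma ip_lincomb2 s t (c d : H -> R[i]) : uniq s -> (forall e, e \in s -> E e) ->
  (forall e, e \in t -> E e) -> {subset t <= s} ->
  ip (\sum_(e <- s) c e *: e) (\sum_(f <- t) d f *: f) = \sum_(f <- t) conjc (d f) * c f.
Proof.
move=> us sE tE ts; rewrite (ip_sumr hH); apply: eq_big_seq => f ft.
by rewrite (ipZr hH) ip_lincomb ?ts //; exact: tE.
Qed.

Lemma sqr_hnorm_lincomb s (c : H -> R[i]) : uniq s -> (forall e, e \in s -> E e) ->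
  hnorm ip (\sum_(e <- s) c e *: e) ^+ 2 = \sum_(e <- s) cmod (c e) ^+ 2.
Proof.
move=> us sE; rewrite (sqr_hnorm hH) ip_lincomb2 // raddf_sum; apply: eq_bigr => e _.
by rewrite mulrC mulcJ.
Qed.

Lemma sqr_hnorm_sub_proj x s : uniq s -> (forall e, e \in s -> E e) ->
  hnorm ip (x - \sum_(e <- s) ip x e *: e) ^+ 2
    = hnorm ip x ^+ 2 - \sum_(e <- s) cmod (ip x e) ^+ 2.
Proof.
move=> us sE; rewrite (sqr_hnormB hH) sqr_hnorm_lincomb // (ip_sumr hH) raddf_sum.
rewrite [X in 2 * X](eq_bigr (fun e => cmod (ip x e) ^+ 2)) => [|e _]; first ring.
by rewrite (ipZr hH) mulrC mulcJ.
Qed.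

Lemma bessel x s : uniq s -> (forall e, e \in s -> E e) ->
  \sum_(e <- s) cmod (ip x e) ^+ 2 <= hnorm ip x ^+ 2.
Proof.
move=> us sE; have := sqr_ge0 (hnorm ip (x - \sum_(e <- s) ip x e *: e)).
by rewrite sqr_hnorm_sub_proj // subr_ge0.
Qed.


Lemma riesz_fischer (c : H -> R[i]) (K : R) :
  (forall F, [set` F] `<=` E -> \sum_(e <- F) cmod (c e) ^+ 2 <= K) ->
  exists y, (forall e, E e -> ip y e = c e) /\ hnorm ip y ^+ 2 <= K.
Proof.
move=> hK; have g0 e : E e -> 0 <= cmod (c e) ^+ 2 by move=> _; apply: sqr_ge0.
have [S [A [ubS AE Amono lowA outA]]] := exhausting_fsets g0 hK.
pose u n := \sum_(e <- A n) c e *: e.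
have u_sqr n : hnorm ip (u n) ^+ 2 = \sum_(e <- A n) cmod (c e) ^+ 2.
  exact: sqr_hnorm_lincomb (fset_uniq _) (AE n).
have u_step n m : (n <= m)%N -> hnorm ip (u m - u n) ^+ 2 <= n.+1%:R^-1.
  move=> nm; rewrite (sqr_hnormB hH) !u_sqr.
  rewrite /u (ip_lincomb2 _ _ (fset_uniq _) (AE m) (AE n) (fsubsetP (Amono _ _ nm))).
  rewrite raddf_sum [X in 2 * X](eq_bigr (fun e => cmod (c e) ^+ 2)) => [|e _].
    by have := ubS _ (AE m); have := lowA n; set d := n.+1%:R^-1; lra.
  by rewrite mulrC mulcJ.
have [y uy] := cvg_hnorm_of_sqr_step hH u_step.
have K0 : 0 <= K by have := hK fset0; rewrite big_nil; apply => x; rewrite /= in_fset0.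
exists y; split => [e Ee|].
- apply: (ip_cvg_eventually hH uy); rewrite /u.
  case: (pselect (exists N, e \in A N)) => [[N eN]|notA].
    exists N => n Nn; rewrite (ip_lincomb _ (fset_uniq _) (AE n)) //.
    by rewrite (fsubsetP (Amono _ _ Nn) e eN).
  have /eqP : cmod (c e) ^+ 2 = 0 by apply: outA => // n; apply/negP => eAn; apply: notA; exists n.
  rewrite sqrf_eq0 => /eqP/cmod_eq0 ce; exists 0%N => n _.
  by rewrite (ip_lincomb _ (fset_uniq _) (AE n)) // ce; case: ifP.
- rewrite -(sqr_sqrtr K0) ler_pXn2r ?nnegrE ?hnorm_ge0 ?sqrtr_ge0 //.
  apply: (hnorm_cvg_le hH uy) => n.
  rewrite -(ler_pXn2r (n := 2)) ?nnegrE ?hnorm_ge0 ?sqrtr_ge0 // (sqr_sqrtr K0) u_sqr.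
  exact: hK.
Qed.


Lemma parseval_approx x eps : 0 < eps -> exists F,
  [set` F] `<=` E /\ hnorm ip x ^+ 2 - eps < \sum_(e <- F) cmod (ip x e) ^+ 2.
Proof.
move=> e0; apply: contrapT => none.
have ub F : [set` F] `<=` E -> \sum_(e <- F) cmod (ip x e) ^+ 2 <= hnorm ip x ^+ 2 - eps.
  by move=> FE; rewrite leNgt; apply/negP => lt; apply: none; exists F.
have [y [yx ny]] := riesz_fischer ub.
suff xy : x = y by move: ny; rewrite -xy; lra.
apply/eqP; rewrite -subr_eq0; apply/eqP/onb_total => e Ee.
by rewrite (ipBl hH) yx // subrr.
Qed.

Lemma proj_approx x eps : 0 < eps -> exists F,
  [set` F] `<=` E /\ hnorm ip (x - \sum_(e <- F) ip x e *: e) ^+ 2 < eps.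
Proof.
move=> /(parseval_approx x) [F [FE lt]]; exists F; split => //.
by rewrite sqr_hnorm_sub_proj ?fset_uniq ?FE //; lra.
Qed.

Lemma parseval_approx_seq s eps : 0 < eps -> exists F, [set` F] `<=` E /\
  forall x, x \in s -> hnorm ip x ^+ 2 - eps < \sum_(e <- F) cmod (ip x e) ^+ 2.
Proof.
move=> e0; elim: s => [|x s [F [FE IH]]]; first by exists fset0; split => // y; rewrite in_fset0.
have [G [GE hx]] := parseval_approx x e0.
exists (F `|` G)%fset; split => [|y]; first exact: subset_fsetU.
have mono z := le_sum_fsubset (fun e (_ : E e) => sqr_ge0 (cmod (ip z e))) (subset_fsetU FE GE).
rewrite inE => /orP[/eqP ->|ys]; first exact: lt_le_trans hx (mono _ _ (fsubsetUr _ _)).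
exact: lt_le_trans (IH y ys) (mono _ _ (fsubsetUl _ _)).
Qed.

Definition linear_functional (phi : H -> R[i]) :=
  forall a x y, phi (a *: x + y) = a * phi x + phi y.

Section LinearFunctional.
Variable phi : H -> R[i].
Hypothesis phi_lin : linear_functional phi.

Lemma lfun0 : phi 0 = 0.
Proof.
have := phi_lin 1 0 0; rewrite scale1r addr0 mul1r => h.
by apply: (addrI (phi 0)); rewrite addr0 -h.
Qed.

Lemma lfunB x y : phi (x - y) = phi x - phi y.
Proof. by rewrite -scaleN1r addrC phi_lin mulN1r addrC. Qed.

Lemma lfun_lincomb s (c : H -> R[i]) : phi (\sum_(e <- s) c e *: e) = \sum_(e <- s) c e * phi e.
Proof.
elim: s => [|e s IH]; first by rewrite !big_nil lfun0.
by rewrite !big_cons phi_lin IH.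
Qed.

Lemma lfun_onb_eq0 (M : R) : (forall x, cmod (phi x) <= M * hnorm ip x) ->
  (forall e, E e -> phi e = 0) -> forall x, phi x = 0.
Proof.
move=> phiM phiE x; apply: cmod_le_eq0 => eps e0.
have M1 : 0 < `|M| + 1 by have := normr_ge0 M; lra.
have d0 : 0 < eps / (`|M| + 1) by rewrite divr_gt0.
have [F [FE small]] := proj_approx x (mulr_gt0 d0 d0).
have -> : phi x = phi (x - \sum_(e <- F) ip x e *: e).
  rewrite lfunB lfun_lincomb big_seq big1 ?subr0 // => e eF.
  by rewrite phiE ?mulr0 //; apply: FE.
set d := x - _ in small *.
have dlt : hnorm ip d < eps / (`|M| + 1).
  by rewrite -(ltr_pXn2r (n := 2)) ?nnegrE ?hnorm_ge0 ?ltW // expr2.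
apply: le_trans (phiM d) _; apply: le_trans (ler_wpM2r (hnorm_ge0 ip d) (ler_norm M)) _.
move: dlt; rewrite ltr_pdivlMr // mulrDr mulr1 mulrC.
by have := hnorm_ge0 ip d; have := normr_ge0 M; nra.
Qed.

End LinearFunctional.

Lemma riesz_representation (phi : H -> R[i]) (M : R) : linear_functional phi ->
  (forall x, cmod (phi x) <= M * hnorm ip x) -> exists w, forall z, phi z = ip z w.
Proof.
move=> phi_lin phiM.
have ub F : [set` F] `<=` E -> \sum_(e <- F) cmod (conjc (phi e)) ^+ 2 <= M ^+ 2.
  (* test [phi] against [g = sum_(e in F) (phi e)^* e], for which [phi g = |g|^2] *)
  move=> FE; pose g := \sum_(e <- F) conjc (phi e) *: e.
  have phig : phi g = (hnorm ip g ^+ 2)%:C.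
    rewrite lfun_lincomb // sqr_hnorm_lincomb ?fset_uniq ?FE //.
    by rewrite rmorph_sum; apply: eq_bigr => e _; rewrite cmodJ mulrC mulcJ.
  rewrite -sqr_hnorm_lincomb ?fset_uniq ?FE // -/g.
  have := phiM g; rewrite phig cmodR ger0_norm ?sqr_ge0 //.
  by have := sqr_ge0 (M - hnorm ip g); nra.
have [w [wE _]] := riesz_fischer ub.
have chi_lin : linear_functional (fun z => phi z - ip z w).
  by move=> a x y; rewrite phi_lin (ip_linl hH); ring.
exists w => z; apply/eqP; rewrite -subr_eq0; apply/eqP; move: z.
apply: (@lfun_onb_eq0 _ chi_lin (M + hnorm ip w)) => [x|e Ee].
- apply: le_trans (cmodB_le _ _) _; rewrite mulrDl lerD ?phiM //.
  by rewrite mulrC cmod_ip_le.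
- by rewrite (ipC hH) wE // conjcK subrr.
Qed.

Lemma adjoint_exists (T : H -> H) : bounded_linear ip T -> exists T', is_adjoint ip T T'.
Proof.
move=> [T_lin [M TM]].
suff /choice [T' hT'] : forall y, exists w, forall x, ip (T x) y = ip x w by exists T'.
move=> y; apply: (riesz_representation (M := M * hnorm ip y)).
  by move=> a x z; rewrite T_lin (ip_linl hH).
move=> x; apply: le_trans (cmod_ip_le hH _ _) _.
by rewrite mulrAC ler_wpM2r ?hnorm_ge0.
Qed.

End OrthonormalBasis.

Section HilbertSchmidt.
Variables (R : realType) (H : lmodType R[i]) (ip : H -> H -> R[i]).
Hypothesis hH : is_hilbert ip.
Implicit Types (S T X Y : H -> H) (F : {fset H}).

Definition hs_sums_le (E : set H) T (K : R) :=
  forall F, [set` F] `<=` E -> \sum_(e <- F) hnorm ip (T e) ^+ 2 <= K.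

Definition hs_bounded (E : set H) T := exists K, hs_sums_le E T K.

Definition has_hs_sum (E : set H) T (s : R[i]) :=
  has_sum E (fun e => (hnorm ip (T e) ^+ 2)%:C) s.

(* Parseval in [E1] and Bessel in [E2] exchange the two double sums of |<S g, f>|^2. *)
Lemma hs_sums_le_adjoint (E1 E2 : set H) S T (K : R) :
  orthonormal_basis ip E1 -> orthonormal_basis ip E2 -> is_adjoint ip S T ->
  hs_sums_le E1 S K -> hs_sums_le E2 T K.
Proof.
move=> hE1 hE2 hST hK F FE; apply/ler_addgt0Pr => eps e0.
have k0 : 0 < (size F)%:R + 1 :> R by rewrite ltr_wpDl ?ler0n.
set k := (size F)%:R + 1 in k0; set d := eps / k.
have d0 : 0 < d by rewrite divr_gt0.
have [G [GE Gapprox]] := parseval_approx_seq hH hE1 (map T F) d0.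
have parseval_F : \sum_(f <- F) hnorm ip (T f) ^+ 2 <=
    \sum_(f <- F) \sum_(g <- G) cmod (ip (T f) g) ^+ 2 + d *+ size F.
  rewrite -iter_addr_0 -count_predT -big_const_seq -big_split big_seq [leRHS]big_seq.
  by apply: ler_sum => f fF; apply/ltW; rewrite -ltrBlDr; apply: Gapprox; apply: map_f.
have exchange : \sum_(f <- F) \sum_(g <- G) cmod (ip (T f) g) ^+ 2 =
    \sum_(g <- G) \sum_(f <- F) cmod (ip (S g) f) ^+ 2.
  rewrite exchange_big; apply: eq_bigr => g _; apply: eq_bigr => f _.
  by rewrite (ipC hH) -hST cmodJ.
have bessel_G : \sum_(g <- G) \sum_(f <- F) cmod (ip (S g) f) ^+ 2 <=
    \sum_(g <- G) hnorm ip (S g) ^+ 2.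
  by apply: ler_sum => g _; apply: (bessel hH hE2); [exact: fset_uniq | exact: FE].
have small : d *+ size F <= eps.
  by rewrite /d -mulr_natr mulrAC ler_pdivrMr // ler_wpM2l ?(ltW e0) // /k lerDl.
move: parseval_F bessel_G (hK G GE) small; rewrite exchange; lra.
Qed.

Lemma hs_sums_le_of_esum (E : set H) T :
  (\esum_(e in E) ((hnorm ip (T e)) ^+ 2)%:E < +oo)%E -> exists K, hs_sums_le E T K.
Proof.
set S := (\esum_(e in E) _)%E => Sfin.
have S0 : (0 <= S)%E by apply: esum_ge0 => x _; rewrite lee_fin sqr_ge0.
exists (fine S) => F FE; rewrite -lee_fin fineK ?ge0_fin_numE //.
apply: esum_ge; exists [set` F]; first by split => //; exact: finite_fset.
by rewrite fsumEFin ?finite_fset // -fsbig_seq ?fset_uniq.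
Qed.

Variables (E : set H) (hE : orthonormal_basis ip E).

Lemma is_adjoint_adj T : bounded_linear ip T -> is_adjoint ip T (adj ip T).
Proof. by move=> /(adjoint_exists hH hE) [T' hT] x y; rewrite (adjE hH hT). Qed.

Lemma hs_bounded_of_hilbert_schmidt T T' : hilbert_schmidt ip T -> is_adjoint ip T T' ->
  hs_bounded E T /\ hs_bounded E T'.
Proof.
move=> [_ [E' [hE' /hs_sums_le_of_esum [K hK]]]] hT.
have hK' := hs_sums_le_adjoint hE' hE' hT hK.
by split; exists K; [apply: hs_sums_le_adjoint hE' hE (is_adjoint_sym hH hT) hK' |
  apply: hs_sums_le_adjoint hE' hE hT hK].
Qed.

Lemma hs_sums_le_ge0 T K : hs_sums_le E T K -> 0 <= K.
Proof. by move=> /(_ fset0); rewrite big_nil; apply => x; rewrite /= in_fset0. Qed.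

Lemma hs_sums_le_comb T1 T2 (a b : R[i]) K1 K2 : hs_sums_le E T1 K1 -> hs_sums_le E T2 K2 ->
  hs_sums_le E (fun x => a *: T1 x + b *: T2 x) (2 * cmod a ^+ 2 * K1 + 2 * cmod b ^+ 2 * K2).
Proof.
move=> h1 h2 F FE.
apply: le_trans (_ : \sum_(e <- F) (2 * cmod a ^+ 2 * hnorm ip (T1 e) ^+ 2
    + 2 * cmod b ^+ 2 * hnorm ip (T2 e) ^+ 2) <= _).
  apply: ler_sum => e _; apply: le_trans (sqr_hnormD_le hH _ _) _.
  by rewrite !(hnormZ hH) !exprMn !mulrA.
rewrite big_split /= -!mulr_sumr.
by apply: lerD; apply: ler_wpM2l; rewrite ?(h1 F FE) ?(h2 F FE) // mulr_ge0 ?sqr_ge0.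
Qed.

Lemma hs_bounded_comb T1 T2 (a b : R[i]) : hs_bounded E T1 -> hs_bounded E T2 ->
  hs_bounded E (fun x => a *: T1 x + b *: T2 x).
Proof. by move=> [K1 h1] [K2 h2]; eexists; apply: hs_sums_le_comb h1 h2. Qed.

Lemma has_hs_sum_exists T : hs_bounded E T -> exists s, has_hs_sum E T s.
Proof.
move=> [K hK]; have [s hs] := has_sum_bounded (fun e _ => sqr_ge0 (hnorm ip (T e))) hK.
by exists s%:C.
Qed.

Lemma has_hs_sum_adjoint T T' s t : is_adjoint ip T T' ->
  has_hs_sum E T s -> has_hs_sum E T' t -> s = t.
Proof.
move=> hT hs ht; have g0 Z e : E e -> 0 <= hnorm ip (Z e) ^+ 2 by move=> _; apply: sqr_ge0.
have a := fsum_le_has_sum (g0 T) hs; have b := fsum_le_has_sum (g0 T') ht.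
have c := has_sum_le ht (hs_sums_le_adjoint hE hE hT a).
have d := has_sum_le hs (hs_sums_le_adjoint hE hE (is_adjoint_sym hH hT) b).
by rewrite (has_sum_realE hs) (has_sum_realE ht); congr (_%:C); lra.
Qed.

Lemma traceE T s : has_sum E (fun e => ip (T e) e) s -> trace ip E T = s.
Proof. by move=> hs; apply: xget_unique => // s' /has_sum_unique; apply. Qed.

Lemma sqr_hs_norm T T' s : is_adjoint ip T T' -> has_hs_sum E T s ->
  hs_norm ip E T ^+ 2 = complex.Re s.
Proof.
move=> hT hs; have tr : trace ip E (adj ip T \o T) = s.
  apply: traceE; apply: eq_has_sum hs => e _.
  by rewrite /= (adjE hH hT) (ipC hH) -hT (ip_self hH) conjcR.
rewrite /hs_norm tr sqr_sqrtr //.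
have := fsum_le_has_sum (fun e _ => sqr_ge0 (hnorm ip (T e))) hs (F := fset0).
by rewrite big_nil; apply => x; rewrite /= in_fset0.
Qed.

Lemma has_hs_sum_sqr_hs_norm T T' : is_adjoint ip T T' -> hs_bounded E T ->
  has_hs_sum E T (hs_norm ip E T ^+ 2)%:C.
Proof. by move=> hT /has_hs_sum_exists [s hs]; rewrite (sqr_hs_norm hT hs) -(has_sum_realE hs). Qed.

Lemma has_hs_sum_hilbert_schmidt T : hilbert_schmidt ip T ->
  has_hs_sum E T (hs_norm ip E T ^+ 2)%:C.
Proof.
move=> hT; have hTs := is_adjoint_adj hT.1.
exact: has_hs_sum_sqr_hs_norm hTs (hs_bounded_of_hilbert_schmidt hT hTs).1.
Qed.

Lemma has_hs_sum_adj_hilbert_schmidt T : hilbert_schmidt ip T ->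
  has_hs_sum E (adj ip T) (hs_norm ip E T ^+ 2)%:C.
Proof.
move=> hT; have hTs := is_adjoint_adj hT.1.
have := has_hs_sum_sqr_hs_norm (is_adjoint_sym hH hTs) (hs_bounded_of_hilbert_schmidt hT hTs).2.
by move=> hsTs; rewrite (has_hs_sum_adjoint hTs (has_hs_sum_hilbert_schmidt hT) hsTs).
Qed.


Definition polar4 (f : R[i] -> R[i]) : R[i] :=
  4^-1 * (f 1 - f (-1) + 'i * f 'i - 'i * f (- 'i)).

Lemma ip_polar u v : ip u v = polar4 (fun a => (hnorm ip (u + a *: v) ^+ 2)%:C).
Proof.
have expand a : ip (u + a *: v) (u + a *: v) =
    ip u u + conjc a * ip u v + a * ip v u + a * conjc a * ip v v.
  by rewrite (ipDl hH) !(ipDr hH) !(ipZl hH) !(ipZr hH); ring.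
have J1 : conjc 1 = 1 :> R[i] by apply/eqP; rewrite eq_complex /= oppr0 !eqxx.
have JN1 : conjc (-1) = -1 :> R[i] by apply/eqP; rewrite eq_complex /= !oppr0 !eqxx.
have Ji : conjc 'i = - 'i :> R[i] by apply/eqP; rewrite eq_complex /= oppr0 !eqxx.
have JNi : conjc (- 'i) = 'i :> R[i] by apply/eqP; rewrite eq_complex /= oppr0 opprK !eqxx.
rewrite /polar4 -!(ip_self hH) !expand J1 JN1 Ji JNi.
set z := ip u v; set w := ip v u; set p := ip u u; set q := ip v v.
have -> : p + 1 * z + 1 * w + 1 * 1 * q - (p + - 1 * z + - 1 * w + - 1 * - 1 * q) +
    'i * (p + - 'i * z + 'i * w + 'i * - 'i * q) - 'i * (p + 'i * z + - 'i * w + - 'i * 'i * q)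
    = 4 * z + 2 * ('i * 'i + 1) * (w - z) by ring.
by rewrite -expr2 sqr_i addNr mulr0 mul0r addr0 mulrA mulVf ?mul1r.
Qed.

Lemma has_sum_polar4 (f : R[i] -> H -> R[i]) (s : R[i] -> R[i]) :
  (forall a, cmod a = 1 -> has_sum E (f a) (s a)) ->
  has_sum E (fun e => polar4 (f^~ e)) (polar4 s).
Proof.
move=> hs; have u1 : cmod (1 : R[i]) = 1 := cmod1 R.
have := hs _ u1; have := hs (-1) (etrans (cmodN _) u1).
have := hs _ (cmodi R); have := hs (- 'i) (etrans (cmodN _) (cmodi R)) => h4 h3 h2 h1.
exact: has_sumMl (has_sumB (has_sumD (has_sumB h1 h2) (has_sumMl 'i h3)) (has_sumMl 'i h4)).
Qed.

Lemma has_sum_ip U V : hs_bounded E U -> hs_bounded E V ->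
  exists w, has_sum E (fun e => ip (U e) (V e)) w.
Proof.
move=> bU bV; have /choice [s hs] a : exists s, has_hs_sum E (fun e => U e + a *: V e) s.
  have [s hs] := has_hs_sum_exists (hs_bounded_comb 1 a bU bV).
  by exists s; apply: eq_has_sum hs => e _; rewrite scale1r.
exists (polar4 s); apply: eq_has_sum (has_sum_polar4 (fun a _ => hs a)) => e _.
by rewrite (ip_polar (U e)).
Qed.

(* Polarize [<X Y e, e> = <Y e, X' e>] and [<Y X e, e> = <X e, Y' e>]: for |a| = 1 the
   squared-norm sums of [Y + a X'] and [X + a Y'] agree, since the adjoint of the former is
   [a^* (X + a Y')]. *)
Lemma trace_comm X X' Y Y' : is_adjoint ip X X' -> is_adjoint ip Y Y' ->
  hs_bounded E X -> hs_bounded E X' -> hs_bounded E Y -> hs_bounded E Y' ->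
  exists tau, has_sum E (fun e => ip (X (Y e)) e) tau /\ has_sum E (fun e => ip (Y (X e)) e) tau.
Proof.
move=> hX hY bX bX' bY bY'.
have /choice [s hs] a : exists s, has_hs_sum E (fun e => Y e + a *: X' e) s /\
    (cmod a = 1 -> has_hs_sum E (fun e => X e + a *: Y' e) s).
  have [s hs] := has_hs_sum_exists (hs_bounded_comb 1 a bY bX').
  exists s; split => [|a1]; first by apply: eq_has_sum hs => e _; rewrite scale1r.
  have hZ := is_adjoint_comb hH 1 a hY (is_adjoint_sym hH hX).
  have [t ht] := has_hs_sum_exists (hs_bounded_comb (conjc 1) (conjc a) bY' bX).
  rewrite (has_hs_sum_adjoint hZ hs ht); apply: eq_has_sum ht => e _.
  have -> : X e + a *: Y' e = a *: (conjc 1 *: Y' e + conjc a *: X e).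
    by rewrite scalerDr !scalerA conjc1 mulr1 mulcJ a1 expr1n rmorph1 scale1r addrC.
  by rewrite (hnormZ hH) a1 mul1r.
exists (polar4 s); split.
- apply: eq_has_sum (has_sum_polar4 (fun a _ => (hs a).1)) => e _.
  by rewrite hX ip_polar.
- apply: eq_has_sum (has_sum_polar4 (fun a a1 => (hs a).2 a1)) => e _.
  by rewrite hY ip_polar.
Qed.

End HilbertSchmidt.

Section ReOpNorm.
Variables (R : realType) (H : lmodType R[i]) (ip : H -> H -> R[i]).
Hypothesis hH : is_hilbert ip.
Variable E : set H.
Variables (T T' : H -> H).
Hypothesis hT : is_adjoint ip T T'.

Lemma ReOpE : ReOp ip T = fun x => 2^-1 *: (T x + T' x).
Proof. by apply: funext => x; rewrite /ReOp (adjE hH hT). Qed.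

Lemma ReOp_self_adjoint : is_adjoint ip (ReOp ip T) (ReOp ip T).
Proof.
rewrite ReOpE => x y; have := is_adjoint_comb hH 2^-1 2^-1 hT (is_adjoint_sym hH hT) x y.
by rewrite conjc_inv2 -!scalerDr [T' y + _]addrC.
Qed.

Lemma sqr_hs_norm_ReOp_le (K1 K2 : R) : hs_sums_le ip E T K1 -> hs_sums_le ip E T' K2 ->
  hs_norm ip E (ReOp ip T) ^+ 2 <= (K1 + K2) / 2.
Proof.
move=> h1 h2; have bT : hs_sums_le ip E (ReOp ip T) ((K1 + K2) / 2).
  move=> F FE.
  apply: le_trans (_ : \sum_(e <- F) (hnorm ip (T e) ^+ 2 + hnorm ip (T' e) ^+ 2) / 2 <= _).
    apply: ler_sum => e _; rewrite ReOpE (hnormZ hH) exprMn cmod_inv2.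
    by have := sqr_hnormD_le hH (T e) (T' e); lra.
  by rewrite -mulr_suml big_split ler_pM2r ?invr_gt0 // lerD ?h1 ?h2.
have [s hs] := has_hs_sum_exists (ex_intro _ _ bT).
by rewrite (sqr_hs_norm hH ReOp_self_adjoint hs); apply: has_sum_le hs bT.
Qed.

Lemma sqr_hs_norm_ReOp s s' tau : has_hs_sum ip E T s -> has_hs_sum ip E T' s' ->
  has_sum E (fun e => ip (T (T e)) e) tau ->
  hs_norm ip E (ReOp ip T) ^+ 2 = complex.Re (s + s') / 4 + complex.Re tau / 2.
Proof.
move=> hs hs' htau.
have hsum : has_hs_sum ip E (ReOp ip T) (4^-1 * (s + s' + tau + conjc tau)).
  apply: eq_has_sum (has_sumMl 4^-1 (has_sumD (has_sumD (has_sumD hs hs') htau)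
    (has_sum_conjc htau))) => e _.
  rewrite ReOpE /= -[in RHS](ip_self hH) (ipZl hH) (ipZr hH) conjc_inv2 mulrA -invfM.
  rewrite (ipDl hH) !(ipDr hH) !(ip_self hH) -hT [ip (T' e) _](ipC hH) -hT.
  by rewrite (_ : 2 * 2 = 4) //; ring.
rewrite (sqr_hs_norm hH ReOp_self_adjoint hsum) invn_complex Re_realM !raddfD /= Re_conjc.
lra.
Qed.

End ReOpNorm.

Section Corollary.
Variables (R : realType) (H : lmodType R[i]) (ip : H -> H -> R[i]).
Hypothesis hH : is_hilbert ip.
Variables (E : set H) (hE : orthonormal_basis ip E).
Variables (B C : H -> H).
Hypotheses (hB : hilbert_schmidt ip B) (hC : hilbert_schmidt ip C).

Let B_lin := proj1 (proj1 hB).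
Let C_lin := proj1 (proj1 hC).
Let hBs := is_adjoint_adj hH hE (proj1 hB).
Let hCs := is_adjoint_adj hH hE (proj1 hC).
Let bB := proj1 (hs_bounded_of_hilbert_schmidt hH hE hB hBs).
Let bBs := proj2 (hs_bounded_of_hilbert_schmidt hH hE hB hBs).
Let bC := proj1 (hs_bounded_of_hilbert_schmidt hH hE hC hCs).
Let bCs := proj2 (hs_bounded_of_hilbert_schmidt hH hE hC hCs).
Let hsB := has_hs_sum_hilbert_schmidt hH hE hB.
Let hsC := has_hs_sum_hilbert_schmidt hH hE hC.
Let hsBs := has_hs_sum_adj_hilbert_schmidt hH hE hB.
Let hsCs := has_hs_sum_adj_hilbert_schmidt hH hE hC.

Lemma trace_sqr_has_sum : has_sum E (fun e => ip (B (B e)) e) (trace ip E (B \o B)).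
Proof. by have [tBB [hBB _]] := trace_comm hH hE hBs hBs bB bBs bB bBs; rewrite (traceE hBB). Qed.

Lemma trace_sum_identity :
  trace ip E ((B \+ C) \o (B \+ C)) + trace ip E ((B \- C) \o (B \- C))
    + 2 * trace ip E ((B \+ C) \o (B \- C)) = 4 * trace ip E (B \o B).
Proof.
have [tBC [hBC hCB]] := trace_comm hH hE hBs hCs bB bBs bC bCs.
have [tCC [hCC _]] := trace_comm hH hE hCs hCs bC bCs bC bCs.
have hBB := trace_sqr_has_sum; set tBB := trace ip E (B \o B) in hBB *.
rewrite (traceE (s := tBB + tBC + tBC + tCC)); last first.
  apply: eq_has_sum (has_sumD (has_sumD (has_sumD hBB hBC) hCB) hCC) => e _.
  by rewrite /= (linmapD B_lin) (linmapD C_lin) !(ipDl hH) !addrA.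
rewrite (traceE (s := tBB - tBC - tBC + tCC)); last first.
  apply: eq_has_sum (has_sumD (has_sumB (has_sumB hBB hBC) hCB) hCC) => e _.
  by rewrite /= (linmapB B_lin) (linmapB C_lin) !(ipBl hH); ring.
rewrite (traceE (s := tBB - tBC + tBC - tCC)); last first.
  apply: eq_has_sum (has_sumB (has_sumD (has_sumB hBB hBC) hCB) hCC) => e _.
  by rewrite /= (linmapB B_lin) (linmapB C_lin) (ipDl hH) !(ipBl hH); ring.
ring.
Qed.

Lemma is_adjointD : is_adjoint ip (B \+ C) (adj ip B \+ adj ip C).
Proof. by move=> x y; rewrite /= (ipDl hH) (ipDr hH) hBs hCs. Qed.

Lemma is_adjointB : is_adjoint ip (B \- C) (adj ip B \- adj ip C).
Proof. by move=> x y; rewrite /= (ipBl hH) (ipBr hH) hBs hCs. Qed.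

Lemma sqr_hs_norm_parallelogram :
  hs_norm ip E (B \+ C) ^+ 2 + hs_norm ip E (B \- C) ^+ 2
    = 2 * hs_norm ip E B ^+ 2 + 2 * hs_norm ip E C ^+ 2.
Proof.
have [sP hsP] := has_hs_sum_exists (hs_bounded_comb hH 1 1 bB bC).
have [sM hsM] := has_hs_sum_exists (hs_bounded_comb hH 1 (-1) bB bC).
rewrite (sqr_hs_norm hH is_adjointD (s := sP)); last first.
  by apply: eq_has_sum hsP => e _; rewrite !scale1r.
rewrite (sqr_hs_norm hH is_adjointB (s := sM)); last first.
  by apply: eq_has_sum hsM => e _; rewrite scale1r scaleN1r.
have : sP + sM = 2%:C * (hs_norm ip E B ^+ 2)%:C + 2%:C * (hs_norm ip E C ^+ 2)%:C.
  apply: has_sum_unique (has_sumD hsP hsM) _.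
  apply: eq_has_sum (has_sumD (has_sumMl 2%:C hsB) (has_sumMl 2%:C hsC)) => e _.
  rewrite -!rmorphM -!rmorphD /= scale1r scaleN1r !scale1r.
  by rewrite (sqr_hnormD hH) (sqr_hnormB hH); congr (_%:C); lra.
by move=> /(congr1 (@complex.Re R)); rewrite !raddfD /=; lra.
Qed.

Lemma Re_trace_adj :
  complex.Re (trace ip E ((B \+ C) \o adj ip (B \- C))) = hs_norm ip E B ^+ 2 - hs_norm ip E C ^+ 2.
Proof.
have [W hW] := has_sum_ip hH bBs bCs.
rewrite (traceE (s := (hs_norm ip E B ^+ 2)%:C - (hs_norm ip E C ^+ 2)%:C + (W - conjc W))).
  by rewrite !raddfD !raddfN /= Re_conjc; lra.
apply: eq_has_sum (has_sumD (has_sumB hsBs hsCs) (has_sumB hW (has_sum_conjc hW))) => e _.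
rewrite /= (adjE hH is_adjointB) is_adjointD /= (ipBl hH) !(ipDr hH) !(ip_self hH).
by rewrite [ip (adj ip C e) _](ipC hH); ring.
Qed.

Lemma hs_norm_ReOp_le_w2e t l1 l2 : `|l1| ^+ 2 + `|l2| ^+ 2 <= 1 ->
  hs_norm ip E (ReOp ip (fun x => expi t *: (l1 *: B x + l2 *: C x))) <= w2e ip E B C.
Proof.
move=> hl; apply: sup_upper_bound; last by exists l1, l2, t.
split; first by eexists; exists l1, l2, t.
have [KB hKB] := bB; have [KC hKC] := bC; have [KBs hKBs] := bBs; have [KCs hKCs] := bCs.
exists (Num.sqrt (KB + KC + KBs + KCs)) => _ [m1 [m2 [u [hm ->]]]].
rewrite -[hs_norm _ _ _]ger0_norm ?sqrtr_ge0 // -sqrtr_sqr ler_wsqrtr //.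
have [c1 c2] : cmod m1 ^+ 2 <= 1 /\ cmod m2 ^+ 2 <= 1.
  move: hm; rewrite !cmodE -!rmorphXn -rmorphD -(rmorph1 (real_complex R)) lecR.
  by have := sqr_ge0 (cmod m1); have := sqr_ge0 (cmod m2); lra.
have -> : (fun x => expi u *: (m1 *: B x + m2 *: C x)) =
    (fun x => (expi u * m1) *: B x + (expi u * m2) *: C x).
  by apply: funext => x; rewrite scalerDr !scalerA.
apply: le_trans (sqr_hs_norm_ReOp_le hH (is_adjoint_comb hH _ _ hBs hCs)
  (hs_sums_le_comb hH _ _ hKB hKC) (hs_sums_le_comb hH _ _ hKBs hKCs)) _.
rewrite !cmodJ !cmodM cmod_expi !mul1r.
have := hs_sums_le_ge0 hKB; have := hs_sums_le_ge0 hKC.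
have := hs_sums_le_ge0 hKBs; have := hs_sums_le_ge0 hKCs.
by nra.
Qed.

Lemma mean_le_sqr_w2e :
  (hs_norm ip E B ^+ 2 + cmod (trace ip E (B \o B))) / 2 <= w2e ip E B C ^+ 2.
Proof.
have [l [l1 ltau]] := exists_phase (trace ip E (B \o B)).
have hT : is_adjoint ip (fun x => l *: B x) (fun y => conjc l *: adj ip B y).
  by move=> x y; rewrite (ipZl hH) (ipZr hH) conjcK hBs.
have -> : (hs_norm ip E B ^+ 2 + cmod (trace ip E (B \o B))) / 2 =
    hs_norm ip E (ReOp ip (fun x => expi 0 *: (l *: B x + 0 *: C x))) ^+ 2.
  have -> : (fun x => expi 0 *: (l *: B x + 0 *: C x)) = (fun x => l *: B x).
    by apply: funext => x; rewrite expi0 scale0r addr0 scale1r.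
  rewrite (sqr_hs_norm_ReOp hH hT (s := (hs_norm ip E B ^+ 2)%:C) (s' := (hs_norm ip E B ^+ 2)%:C)
    (tau := (cmod (trace ip E (B \o B)))%:C)) /=.
  - by lra.
  - by apply: eq_has_sum hsB => e _; rewrite (hnormZ hH) l1 mul1r.
  - by apply: eq_has_sum hsBs => e _; rewrite (hnormZ hH) cmodJ l1 mul1r.
  - rewrite -ltau; apply: eq_has_sum (has_sumMl (l * l) trace_sqr_has_sum) => e _.
    by rewrite /= (linmapZ B_lin) scalerA (ipZl hH).
have hl : `|l| ^+ 2 + `|0 : R[i]| ^+ 2 <= 1.
  by rewrite !cmodE l1 cmod0 rmorph0 rmorph1 expr1n expr0n addr0.
have w_ge := hs_norm_ReOp_le_w2e 0 hl.
by rewrite ler_pXn2r ?nnegrE ?sqrtr_ge0 // (le_trans (sqrtr_ge0 _) w_ge).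
Qed.

End Corollary.

Theorem corollary3p2 (R : realType) (H : lmodType R[i]) (ip : H -> H -> R[i])
  (hH : is_hilbert ip) (E : set H) (hE : orthonormal_basis ip E)
  (B C : H -> H) (hB : hilbert_schmidt ip B) (hC : hilbert_schmidt ip C) :
  let P := B \+ C in
  let M := B \- C in
  8^-1 * complex.Re `| trace ip E (P \o P) + trace ip E (M \o M)
               + 2 * trace ip E (P \o M) |
  + 8^-1 * (hs_norm ip E P ^+ 2 + hs_norm ip E M ^+ 2)
  + 4^-1 * complex.Re (trace ip E (P \o adj ip M))
  <= w2e ip E B C ^+ 2.
Proof.
cbv zeta; rewrite (trace_sum_identity hH hE hB hC) (sqr_hs_norm_parallelogram hH hE hB hC).
rewrite (Re_trace_adj hH hE hB hC) Re_norm cmodM cmod_natr.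
by have := mean_le_sqr_w2e hH hE hB hC; lra.
Qed.
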